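(* Let $A\in\mathbb{R}^{nm\times nm}$, $x=\operatorname{vec}(X)\in S^{nm-1}\cap\mathcal{M}_r$, $\mathfrak{R}(x)=x^\top Ax$ and $P=\mathrm{P}_{T_X\mathcal{M}_r}$. Suppose $\xi\in\mathbb{R}^{nm}$ satisfies $P\xi=\xi$, $x^\top\xi=0$ and \[ (I-xx^\top)\,P\,(A-\mathfrak{R}(x)I)\,P\,(I-xx^\top)\,\xi=-P(I-xx^\top)Ax. \] Then $\tilde x=x+\xi$ satisfies $P\tilde x=\tilde x$ and \[ P\,(A-\mathfrak{R}(x)I)\,P\,\tilde x=\alpha\, x,\qquad \alpha=x^\top P(A-\mathfrak{R}(x)I)P\xi . \] In particular, if $\alpha\neq0$, then $\tilde x/\alpha$ solves the low-rank Rayleigh quotient iteration system $P(A-\mathfrak{R}(x)I)P\,y=x$, $Py=y$, and $R(\tilde x/\alpha)=R(\tilde x)$ for the normalized retraction $R$ (whenever it is scale invariant, e.g. $R(y)=\mathrm{P}_{\mathcal{M}_r}(y)/\|\mathrm{P}_{\mathcal{M}_r}(y)\|$ with $\alpha>0$).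
   Context: $\operatorname{vec}$ is columnwise reshaping, $S^{nm-1}$ the unit sphere of $\mathbb{R}^{nm}$, $\mathcal{M}_r$ the manifold of (vectorized) $n\times m$ matrices of rank exactly $r$. With thin SVD $X=USV^\top$ ($U^\top U=I_r$, $V^\top V=I_r$), $\mathrm{P}_{T_X\mathcal{M}_r}=VV^\top\otimes UU^\top+VV^\top\otimes(I_n-UU^\top)+(I_m-VV^\top)\otimes UU^\top$ is the orthogonal projection onto the tangent space of $\mathcal{M}_r$ at $X$; note $Px=x$. $\mathrm{P}_{\mathcal{M}_r}(y)$ denotes a best approximation of $y$ in $\mathcal{M}_r$ in the Euclidean norm. *)

From HB Require Import structures.
From mathcomp Require Import all_boot all_order all_algebra.
Set Implicit Arguments. Unset Strict Implicit. Unset Printing Implicit Defensive.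
Import Order.TTheory GRing.Theory Num.Theory.
Local Open Scope ring_scope.

(* Column-wise vectorization of an n x m matrix: entry X i j sits at the
   index mxvec_index j i, i.e. at position j*n + i (column-major). *)
Definition vec (R : Type) (n m : nat) (X : 'M[R]_(n, m)) : 'cV[R]_(m * n) :=
  (mxvec X^T)^T.

(* Kronecker product B (x) C, with the index convention matching [vec]:
   (B (x) C) vec X = vec (C X B^T). Row index k corresponds to the pair
   (j, i) = enum_val k, i.e. position j * n1 + i. *)
Definition kron (R : pzRingType) (m1 m2 n1 n2 : nat)
  (B : 'M[R]_(m1, m2)) (C : 'M[R]_(n1, n2)) : 'M[R]_(m1 * n1, m2 * n2) :=
  \matrix_(k, l)
    (let p := enum_val (cast_ord (esym (mxvec_cast m1 n1)) k) in
     let q := enum_val (cast_ord (esym (mxvec_cast m2 n2)) l) in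
     B p.1 q.1 * C p.2 q.2).

(* Orthogonal projection onto the tangent space of M_r at X = U S V^T:
   VV^T (x) UU^T + VV^T (x) (I - UU^T) + (I - VV^T) (x) UU^T. *)
Definition tangentProj (R : pzRingType) (n m r : nat)
  (U : 'M[R]_(n, r)) (V : 'M[R]_(m, r)) : 'M[R]_(m * n) :=
  kron (V *m V^T) (U *m U^T)
  + kron (V *m V^T) (1%:M - U *m U^T)
  + kron (1%:M - V *m V^T) (U *m U^T).

Definition rayleigh (R : pzRingType) (N : nat) (A : 'M[R]_N) (x : 'cV[R]_N) : R :=
  (x^T *m A *m x) 0 0.

From HB Require Import structures.
From mathcomp Require Import all_boot all_order all_algebra.
Set Implicit Arguments. Unset Strict Implicit. Unset Printing Implicit Defensive.
Import Order.TTheory GRing.Theory Num.Theory.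
Local Open Scope ring_scope.

(* Writing M := P (A - R(x) I) P and Q := I - x x^T, one has M x = P Q A x as
   soon as P x = x, and Q xi = xi, so the hypothesis reads Q M xi = - M x.
   Splitting M xi along x and its complement, M xi = (x^T M xi) x + Q M xi,
   hence M (x + xi) = alpha x. The tangent-space projection fixes x = vec X
   because X = U S V^T is invariant under U U^T on the left and V V^T on the
   right; the rescaled statements are then immediate. *)

Section Vectorization.

Variable R : comPzRingType.

Lemma kron_vec m1 m2 n1 n2 (B : 'M[R]_(m1, m2)) (C : 'M[R]_(n1, n2))
  (Y : 'M[R]_(n2, m2)) : kron B C *m vec Y = vec (C *m Y *m B^T).
Proof.
apply/matrixP => k z; rewrite {z}ord1.
case/mxvec_indexP: k => j i.
rewrite /vec !mxE mxvecE mxE (reindex _ (curry_mxvec_bij _ _)) /= [RHS]mxE.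
rewrite [RHS](eq_bigr (fun q1 => \sum_q2 C i q2 * Y q2 q1 * B j q1)); last first.
  by move=> q1 _; rewrite !mxE mulr_suml; apply: eq_bigr => q2 _; rewrite ?mxE.
rewrite pair_bigA /=; apply: eq_bigr => [[q1 q2]] _ /=.
rewrite !mxE mxvecE mxE /mxvec_index !cast_ordK !enum_rankK /=.
by rewrite [RHS]mulrC mulrA.
Qed.

Lemma tangentProj_vec n m r (U : 'M[R]_(n, r)) (V : 'M[R]_(m, r))
  (X : 'M[R]_(n, m)) :
  U *m U^T *m X = X -> X *m (V *m V^T) = X ->
  tangentProj U V *m vec X = vec X.
Proof.
move=> hUX hXV.
have hXVt : X *m (V *m V^T)^T = X by rewrite trmx_mul trmxK.
rewrite /tangentProj !mulmxDl !kron_vec hUX hXVt !linearB /= trmx1.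
by rewrite mulmxBl mul1mx mulmx1 hUX hXVt !subrr mul0mx /vec !linear0 !addr0.
Qed.

End Vectorization.

Section SVDRange.

Variables (R : pzRingType) (n m r : nat).
Variables (U : 'M[R]_(n, r)) (S : 'M[R]_r) (V : 'M[R]_(m, r)).

Lemma svd_colproj : U^T *m U = 1%:M -> U *m U^T *m (U *m S *m V^T) = U *m S *m V^T.
Proof. by move=> hU; rewrite !mulmxA -(mulmxA U) hU mulmx1. Qed.

Lemma svd_rowproj : V^T *m V = 1%:M ->
  U *m S *m V^T *m (V *m V^T) = U *m S *m V^T.
Proof. by move=> hV; rewrite mulmxA -(mulmxA _ V^T) hV mulmx1. Qed.

End SVDRange.

Section RayleighShift.

Variables (R : comPzRingType) (N : nat).
Variables (A P : 'M[R]_N) (x xi : 'cV[R]_N).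
Hypotheses (hPx : P *m x = x) (hxxi : x^T *m xi = 0).

Let Q : 'M[R]_N := 1%:M - x *m x^T.
Let M : 'M[R]_N := P *m (A - (rayleigh A x)%:M) *m P.

Lemma rayleigh_shift_mulx : M *m x = P *m Q *m A *m x.
Proof.
rewrite /M /Q -mulmxA hPx mulmxBr mulmxBl mulmxBr mulmx1 !mulmxBl.
congr (_ - _); rewrite mul_mx_scalar -scalemxAl hPx -!mulmxA (mulmxA x^T).
by rewrite [x^T *m A *m x]mx11_scalar mul_mx_scalar -scalemxAr hPx.
Qed.

Lemma rayleigh_shift_newton_step :
  Q *m P *m (A - (rayleigh A x)%:M) *m P *m Q *m xi = - (P *m Q *m A *m x) ->
  M *m (x + xi) = (x^T *m M *m xi) 0 0 *: x.
Proof.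
move=> hEq.
have hQxi : Q *m xi = xi by rewrite /Q mulmxBl mul1mx -mulmxA hxxi mulmx0 subr0.
have hQMxi : Q *m (M *m xi) = - (M *m x).
  by rewrite rayleigh_shift_mulx -hEq -!mulmxA hQxi.
have hsplit : M *m xi = (x^T *m M *m xi) 0 0 *: x + Q *m (M *m xi).
  rewrite -mulmxA; move: (M *m xi) => y.
  rewrite /Q mulmxBl mul1mx -mulmxA.
  have -> : x *m (x^T *m y) = (x^T *m y) 0 0 *: x.
    by rewrite {1}[x^T *m y]mx11_scalar mul_mx_scalar.
  by rewrite addrC subrK.
by rewrite mulmxDr hsplit hQMxi addrCA subrr addr0.
Qed.

End RayleighShift.

Theorem mainTheorem5 (R : realFieldType) (n m r : nat)
  (A : 'M[R]_(m * n)) (X : 'M[R]_(n, m))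
  (U : 'M[R]_(n, r)) (S : 'M[R]_r) (V : 'M[R]_(m, r))
  (xi : 'cV[R]_(m * n)) :
  U^T *m U = 1%:M -> V^T *m V = 1%:M ->
  is_diag_mx S -> (forall i, 0 < S i i) ->
  X = U *m S *m V^T ->
  \rank X = r ->
  (vec X)^T *m vec X = 1%:M ->
  let x := vec X in
  let P := tangentProj U V in
  let Rx := rayleigh A x in
  let Id := (1%:M : 'M[R]_(m * n)) in
  P *m xi = xi ->
  x^T *m xi = 0 ->
  (Id - x *m x^T) *m P *m (A - Rx%:M) *m P *m (Id - x *m x^T) *m xi
    = - (P *m (Id - x *m x^T) *m A *m x) ->
  let xt := x + xi in
  let alpha := (x^T *m P *m (A - Rx%:M) *m P *m xi) 0 0 in
  [/\ P *m xt = xt,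
      P *m (A - Rx%:M) *m P *m xt = alpha *: x,
      alpha != 0 ->
        P *m (A - Rx%:M) *m P *m (alpha^-1 *: xt) = x
        /\ P *m (alpha^-1 *: xt) = alpha^-1 *: xt
    & forall Ret : 'cV[R]_(m * n) -> 'cV[R]_(m * n),
        (forall (c : R) (y : 'cV[R]_(m * n)), 0 < c -> Ret (c *: y) = Ret y) ->
        0 < alpha -> Ret (alpha^-1 *: xt) = Ret xt].
Proof.
move=> hU hV _ _ hX _ _ x P Rx Id hPxi hxxi hEq xt alpha.
have hPx : P *m x = x.
  by apply: tangentProj_vec; rewrite hX ?svd_colproj ?svd_rowproj.
have hPxt : P *m xt = xt by rewrite mulmxDr hPx hPxi.
have hMxt : P *m (A - Rx%:M) *m P *m xt = alpha *: x.
  by rewrite (rayleigh_shift_newton_step hPx hxxi hEq) !mulmxA.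
split => // [alpha_neq0 | Ret hRet alpha_gt0].
- by rewrite -!scalemxAr hMxt hPxt scalerA mulVf // scale1r.
- by apply: hRet; rewrite invr_gt0.
Qed.
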